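(* The following identities hold in $Y[[u^{-1}]]$: (1) $t_{1,1}(u-1)t_{1,2}(u)=t_{1,2}(u-1)t_{1,1}(u)$; (2) $t_{1,1}(u)t_{2,1}(u-1)=t_{2,1}(u)t_{1,1}(u-1)$; (3) $t_{1,2}(u-1)t_{1,2}(u)=0$; (4) $(k+1)t_{2,1}(u)t_{1,1}(u-k)=k\,t_{1,1}(u-k)t_{2,1}(u)+t_{2,1}(u-k)t_{1,1}(u)$ for every $k\in\mathbb{Z}_{\ge0}$.
   Context: Let $k$ be an algebraically closed field of characteristic $p>2$ (the integer $k$ in (4) is a separate variable). Fix parities $|1|=0$, $|2|=1$. The super Yangian $Y=Y_{1|1}$ is the associative superalgebra over $k$ generated by $t_{i,j}^{(r)}$ ($1\le i,j\le2$, $r>0$) of parity $|i|+|j|\pmod2$, with relations $[t_{i,j}^{(r)},t_{k,l}^{(s)}]=(-1)^{|i||j|+|i||k|+|j||k|}\sum_{t=0}^{\min(r,s)-1}(t_{k,j}^{(t)}t_{i,l}^{(r+s-1-t)}-t_{k,j}^{(r+s-1-t)}t_{i,l}^{(t)})$ (supercommutator), $t_{i,j}^{(0)}=\delta_{ij}$. Put $t_{i,j}(u)=\sum_{r\ge0}t_{i,j}^{(r)}u^{-r}$; shifted series $t_{i,j}(u-c)$ are expanded in $u^{-1}$. *)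

From HB Require Import structures.
From mathcomp Require Import all_boot all_order all_algebra.
Set Implicit Arguments. Unset Strict Implicit. Unset Printing Implicit Defensive.
Import Order.TTheory GRing.Theory Num.Theory.
Local Open Scope ring_scope.

(* Indices {1,2} of the paper are encoded as 'I_2: paper index 1 = i1 = ord0,
   paper index 2 = i2 = ord_max. Parity |1| = 0, |2| = 1. *)
Definition i1 : 'I_2 := ord0.
Definition i2 : 'I_2 := ord_max.
Definition par (i : 'I_2) : nat := nat_of_ord i.

(* A family t i j r (= t_{i,j}^{(r)}) in a F-algebra A satisfying the defining
   relations of the super Yangian Y_{1|1}:  t^{(0)}_{ij} = delta_ij and, for r,s>0,
   the supercommutator relation (generator t_{ij}^{(r)} has parity |i|+|j|). *)
Definition yangian_rel (F : fieldType) (A : algType F)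
    (t : 'I_2 -> 'I_2 -> nat -> A) : Prop :=
  (forall i j, t i j 0%N = (i == j)%:R) /\
  (forall (i j k l : 'I_2) (r s : nat), (0 < r)%N -> (0 < s)%N ->
     t i j r * t k l s
       - ((-1) ^+ ((par i + par j) * (par k + par l))%N : A) * (t k l s * t i j r)
     = ((-1) ^+ (par i * par j + par i * par k + par j * par k)%N : A) *
       \sum_(q < minn r s)
         (t k j q * t i l (r + s - 1 - q)%N - t k j (r + s - 1 - q)%N * t i l q)).

(* Formal power series in u^{-1} with coefficients in A: the coefficient of
   u^{-n} is f n.  Product = Cauchy product. *)
Definition sermul (F : fieldType) (A : algType F) (f g : nat -> A) : nat -> A :=
  fun n => \sum_(m < n.+1) f m * g (n - m)%N.

(* Coefficient of u^{-n} in the expansion of (u - c)^{-r} in u^{-1}: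
   (u-c)^{-r} = sum_{m>=0} C(r+m-1, m) c^m u^{-r-m}  (r >= 1), and (u-c)^0 = 1. *)
Definition invpow_coef (F : fieldType) (c : F) (r n : nat) : F :=
  if r == 0%N then (n == 0%N)%:R
  else if (r <= n)%N then ('C(n.-1, r.-1))%:R * c ^+ (n - r)
  else 0.

(* t_{i,j}(u - c) = sum_{r>=0} t_{i,j}^{(r)} (u-c)^{-r}, expanded in u^{-1}. *)
Definition tser (F : fieldType) (A : algType F) (t : 'I_2 -> 'I_2 -> nat -> A)
    (i j : 'I_2) (c : F) : nat -> A :=
  fun n => \sum_(r < n.+1) invpow_coef c r n *: t i j r.

From HB Require Import structures.
From mathcomp Require Import all_boot all_order all_algebra.
Set Implicit Arguments. Unset Strict Implicit. Unset Printing Implicit Defensive.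
Import GRing.Theory.
Local Open Scope ring_scope.

(* The defining relations are equivalent to
     [t_ij^(r+1), t_kl^(s)] - [t_ij^(r), t_kl^(s+1)]
       = +-(t_kj^(r) t_il^(s) - t_kj^(s) t_il^(r))
   for all r, s >= 0 (supercommutators). Summed against u^{-r} v^{-s}, a shift
   in r multiplies the generating series by u and a shift in s by v, so this
   is the RTT relation
     (u - v) [t_ij(u), t_kl(v)] = +-(t_kj(u) t_il(v) - t_kj(v) t_il(u)).
   Identities (1)-(4) are its specialisations at v = u - c (or u <-> v) for
   suitable indices; (3) reads 2 t_12(u-1) t_12(u) = 0, and 2 is invertible
   since p > 2. *)

Section InvPowCoef.
Variables (F : fieldType) (c : F).

(* The coefficients of u (u - c)^{-s-1} = c (u - c)^{-s-1} + (u - c)^{-s}. *)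
Lemma invpow_coefSS s m :
  invpow_coef c s.+1 m.+1 = c * invpow_coef c s.+1 m + invpow_coef c s m.
Proof.
rewrite /invpow_coef /=; case: s => [|s] /=.
  case: m => [|m] /=; first by rewrite bin0 subnn expr0 mulr1 mulr0 add0r.
  by rewrite !bin0 !mul1r !subn1 /= exprS addr0.
case: m => [|m]; first by rewrite mulr0 addr0.
rewrite !ltnS; case: (ltngtP s m) => [lt_sm|lt_ms|<-] /=.
- by rewrite binS natrD mulrDl !subSS -(subnSK lt_sm) exprS mulrCA.
- by rewrite mulr0 addr0.
- by rewrite !subSS subnn !binn !expr0 mulr0 add0r.
Qed.

Lemma invpow_coef_small s m : (m < s)%N -> invpow_coef c s m = 0.
Proof. by case: s => [//|s] lt_ms; rewrite /invpow_coef /= leqNgt lt_ms. Qed.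

End InvPowCoef.

Lemma invpow_coef0 (F : fieldType) r n : invpow_coef (0 : F) r n = (r == n)%:R.
Proof.
rewrite /invpow_coef; case: r => [|r] /=; first by rewrite eq_sym.
case: (ltngtP r.+1 n) => [lt_rn|lt_nr|<-].
- by rewrite expr0n subn_eq0 leqNgt lt_rn mulr0.
- by [].
- by rewrite subnn binn mulr1.
Qed.

Section ShiftedSeries.
Variables (F : fieldType) (V : lmodType F) (c : F).

(* [ser_at h] lists the coefficients of sum_s h s (u - c)^{-s} in powers of
   u^{-1}, so that [tser t i j c] is [ser_at c (t i j)]; [ser2_at g] does the
   same for sum_{r,s} g r s u^{-r} (u - c)^{-s}. *)
Definition ser_at (h : nat -> V) (m : nat) : V :=
  \sum_(s < m.+1) invpow_coef c s m *: h s.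

Definition ser2_at (g : nat -> nat -> V) (n : nat) : V :=
  \sum_(r < n.+1) ser_at (g r) (n - r).

Lemma ser_atS (h : nat -> V) m :
  h 0%N = 0 -> ser_at (fun s => h s.+1) m = ser_at h m.+1 - c *: ser_at h m.
Proof.
move=> h0.
have drop0 k j : \sum_(s < k.+1) invpow_coef c s j *: h s
                = \sum_(s < k) invpow_coef c s.+1 j *: h s.+1.
  by rewrite big_ord_recl h0 scaler0 add0r.
rewrite /ser_at !drop0.
have -> : \sum_(s < m) invpow_coef c s.+1 m *: h s.+1
        = \sum_(s < m.+1) invpow_coef c s.+1 m *: h s.+1.
  by rewrite big_ord_recr /= invpow_coef_small // scale0r addr0.
rewrite scaler_sumr -sumrB; apply: eq_bigr => s _.
by rewrite scalerA -scalerBl invpow_coefSS addrC addKr.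
Qed.

Lemma eq_ser2_at (f g : nat -> nat -> V) n :
  (forall r s, f r s = g r s) -> ser2_at f n = ser2_at g n.
Proof. by move=> efg; apply: eq_bigr => r _; apply: eq_bigr => s _; rewrite efg. Qed.

Lemma ser2_atB (f g : nat -> nat -> V) n :
  ser2_at (fun r s => f r s - g r s) n = ser2_at f n - ser2_at g n.
Proof.
rewrite /ser2_at -sumrB; apply: eq_bigr => r _.
by rewrite /ser_at -sumrB; apply: eq_bigr => s _; rewrite scalerBr.
Qed.

Lemma ser2_atSl (g : nat -> nat -> V) n :
  (forall s, g 0%N s = 0) -> ser2_at (fun r => g r.+1) n = ser2_at g n.+1.
Proof.
move=> g0; rewrite [RHS]/ser2_at big_ord_recl.
have -> : ser_at (g 0%N) (n.+1 - 0) = 0.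
  by rewrite /ser_at big1 // => s _; rewrite g0 scaler0.
by rewrite add0r; apply: eq_bigr => r _; rewrite subSS.
Qed.

Lemma ser2_atSr (g : nat -> nat -> V) n :
  (forall r, g r 0%N = 0) ->
  ser2_at (fun r s => g r s.+1) n = ser2_at g n.+1 - c *: ser2_at g n.
Proof.
move=> g0; rewrite [in RHS]/ser2_at big_ord_recr /= subnn.
rewrite {2}/ser_at big_ord1 g0 scaler0 addr0 scaler_sumr -sumrB.
apply: eq_bigr => r _; rewrite ser_atS // subSn //.
by rewrite -ltnS.
Qed.

Lemma ser2_at_step (g : nat -> nat -> V) n :
  (forall s, g 0%N s = 0) -> (forall r, g r 0%N = 0) ->
  ser2_at (fun r s => g r.+1 s - g r s.+1) n = c *: ser2_at g n.
Proof.
move=> g0s gr0; rewrite ser2_atB ser2_atSl // ser2_atSr //.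
by rewrite opprB addrC subrK.
Qed.

End ShiftedSeries.

Lemma ser_at0 (F : fieldType) (V : lmodType F) (h : nat -> V) n :
  ser_at 0 h n = h n.
Proof.
rewrite /ser_at big_ord_recr /= invpow_coef0 eqxx scale1r big1 ?add0r // => s _.
by rewrite invpow_coef0 ltn_eqF // scale0r.
Qed.

Section ShiftedProducts.
Variables (F : fieldType) (A : algType F) (c : F).

Lemma ser2_atMl (x : A) (g : nat -> nat -> A) n :
  ser2_at c (fun r s => x * g r s) n = x * ser2_at c g n.
Proof.
rewrite /ser2_at mulr_sumr; apply: eq_bigr => r _.
by rewrite /ser_at mulr_sumr; apply: eq_bigr => s _; rewrite scalerAr.
Qed.

Lemma sermul_ser_at0l (a b : nat -> A) n :
  sermul (ser_at 0 a) (ser_at c b) n = ser2_at c (fun r s => a r * b s) n.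
Proof.
apply: eq_bigr => r _; rewrite ser_at0 mulr_sumr.
by apply: eq_bigr => s _; rewrite scalerAr.
Qed.

Lemma sermul_ser_at0r (a b : nat -> A) n :
  sermul (ser_at c b) (ser_at 0 a) n = ser2_at c (fun r s => b s * a r) n.
Proof.
rewrite /sermul /ser2_at (reindex_inj rev_ord_inj) /=; apply: eq_bigr => r _.
rewrite subSS ser_at0 mulr_suml subKn; last by rewrite -ltnS.
by apply: eq_bigr => s _; rewrite scalerAl.
Qed.

End ShiftedProducts.

Definition rtt_sum (R : pzRingType) (X Y : nat -> R) (r s : nat) : R :=
  \sum_(q < minn r s) (X q * Y (r + s - 1 - q)%N - X (r + s - 1 - q)%N * Y q).

Lemma rtt_sumSl_subSr (R : pzRingType) (X Y : nat -> R) r s :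
  rtt_sum X Y r.+1 s - rtt_sum X Y r s.+1 = X r * Y s - X s * Y r.
Proof.
pose T q := X q * Y (r + s - q)%N - X (r + s - q)%N * Y q.
have -> : rtt_sum X Y r.+1 s = \sum_(q < minn r.+1 s) T q.
  by apply: eq_bigr => q _; rewrite addSn subn1.
have -> : rtt_sum X Y r s.+1 = \sum_(q < minn r s.+1) T q.
  by apply: eq_bigr => q _; rewrite addnS subn1.
case: (ltngtP r s) => [lt_rs|lt_sr|<-].
- rewrite (minn_idPl lt_rs) (minn_idPl (ltnW (leqW lt_rs))).
  by rewrite big_ord_recr addrC addKr /T addKn.
- rewrite (minn_idPr (leqW (ltnW lt_sr))) (minn_idPr lt_sr).
  by rewrite big_ord_recr opprD addrA subrr add0r /T addnK opprB.
- by rewrite (minn_idPr (leqnSn r)) (minn_idPl (leqnSn r)) !subrr.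
Qed.

Definition super_sign (i j k l : 'I_2) : nat := (par i + par j) * (par k + par l).
Definition rtt_sign (i j k l : 'I_2) : nat := par i * par j + par i * par k + par j * par k.

Lemma super_sign_diag (R : pzRingType) (i k l : 'I_2) :
  (-1) ^+ super_sign i i k l = 1 :> R.
Proof. by rewrite -signr_odd oddM oddD addbb. Qed.

Section SuperYangian.
Variables (F : fieldType) (A : algType F) (t : 'I_2 -> 'I_2 -> nat -> A).
Hypothesis ht : yangian_rel t.

Definition supercomm (i j k l : 'I_2) (r s : nat) : A :=
  t i j r * t k l s - (-1) ^+ super_sign i j k l * (t k l s * t i j r).

(* t^{(0)} is the identity on the diagonal, where the sign is +1, and 0 off it. *)
Lemma supercomm0l i j k l s : supercomm i j k l 0 s = 0.
Proof.
rewrite /supercomm (proj1 ht); case: eqVneq => [<-|_].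
  by rewrite super_sign_diag mulr1 !mul1r subrr.
by rewrite mul0r mulr0 mulr0 subrr.
Qed.

Lemma supercomm0r i j k l r : supercomm i j k l r 0 = 0.
Proof.
rewrite /supercomm (proj1 ht); case: eqVneq => [<-|_].
  by rewrite /super_sign mulnC super_sign_diag mulr1 !mul1r subrr.
by rewrite mul0r mulr0 mulr0 subrr.
Qed.

Lemma supercomm_rtt i j k l r s :
  supercomm i j k l r s = (-1) ^+ rtt_sign i j k l * rtt_sum (t k j) (t i l) r s.
Proof.
case: r => [|r]; first by rewrite supercomm0l /rtt_sum min0n big_ord0 mulr0.
case: s => [|s]; first by rewrite supercomm0r /rtt_sum minn0 big_ord0 mulr0.
exact: (proj2 ht).
Qed.

Lemma supercomm_step i j k l r s :
  supercomm i j k l r.+1 s - supercomm i j k l r s.+1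
  = (-1) ^+ rtt_sign i j k l * (t k j r * t i l s - t k j s * t i l r).
Proof. by rewrite !supercomm_rtt -mulrBr rtt_sumSl_subSr. Qed.

Lemma ser2_at_rtt i j k l c n :
  ser2_at c (fun r s =>
    (-1) ^+ rtt_sign i j k l * (t k j r * t i l s - t k j s * t i l r)) n
  = (-1) ^+ rtt_sign i j k l *
    (sermul (tser t k j 0) (tser t i l c) n - sermul (tser t k j c) (tser t i l 0) n).
Proof. by rewrite ser2_atMl ser2_atB -sermul_ser_at0l -sermul_ser_at0r. Qed.

(* The RTT relation at (u, v) = (u, u - c), and below at (u - c, u). *)
Lemma tser_rtt i j k l c n :
  (-1) ^+ rtt_sign i j k l *
    (sermul (tser t k j 0) (tser t i l c) n - sermul (tser t k j c) (tser t i l 0) n)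
  = c *: (sermul (tser t i j 0) (tser t k l c) n
          - (-1) ^+ super_sign i j k l * sermul (tser t k l c) (tser t i j 0) n).
Proof.
rewrite -ser2_at_rtt -(eq_ser2_at _ _ (supercomm_step i j k l)).
rewrite ser2_at_step; [|exact: supercomm0l|exact: supercomm0r].
by rewrite /supercomm ser2_atB ser2_atMl -sermul_ser_at0l -sermul_ser_at0r.
Qed.

Lemma tser_rtt_swap i j k l c n :
  (-1) ^+ rtt_sign i j k l *
    (sermul (tser t k j 0) (tser t i l c) n - sermul (tser t k j c) (tser t i l 0) n)
  = c *: (sermul (tser t i j c) (tser t k l 0) n
          - (-1) ^+ super_sign i j k l * sermul (tser t k l 0) (tser t i j c) n).
Proof.
have step r s : supercomm i j k l s r.+1 - supercomm i j k l s.+1 r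
    = (-1) ^+ rtt_sign i j k l * (t k j r * t i l s - t k j s * t i l r).
  by rewrite -opprB supercomm_step -mulrN opprB.
rewrite -ser2_at_rtt -(eq_ser2_at _ _ step).
rewrite (@ser2_at_step _ _ c (fun r s => supercomm i j k l s r));
  [|exact: supercomm0r|exact: supercomm0l].
by rewrite /supercomm ser2_atB ser2_atMl -sermul_ser_at0l -sermul_ser_at0r.
Qed.

Lemma t11_t12_exchange n :
  sermul (tser t i1 i1 1) (tser t i1 i2 0) n = sermul (tser t i1 i2 1) (tser t i1 i1 0) n.
Proof.
have := tser_rtt i1 i1 i1 i2 1 n.
rewrite -[rtt_sign _ _ _ _]/0%N -[super_sign _ _ _ _]/0%N expr0 !mul1r scale1r.
by move=> /addrI /oppr_inj.
Qed.

Lemma t11_t21_exchange n :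
  sermul (tser t i1 i1 0) (tser t i2 i1 1) n = sermul (tser t i2 i1 0) (tser t i1 i1 1) n.
Proof.
have := tser_rtt i1 i1 i2 i1 1 n.
rewrite -[rtt_sign _ _ _ _]/0%N -[super_sign _ _ _ _]/0%N expr0 !mul1r scale1r.
by move=> /addIr.
Qed.

Lemma t12_shift_sqr_eq0 n : (2%:R : F) != 0 ->
  sermul (tser t i1 i2 1) (tser t i1 i2 0) n = 0.
Proof.
move=> two_neq0; have := tser_rtt i1 i2 i1 i2 1 n.
rewrite -[rtt_sign _ _ _ _]/0%N -[super_sign _ _ _ _]/1%N expr0 expr1 !mul1r scale1r.
move=> /addrI; rewrite mulN1r opprK => /eqP.
by rewrite eq_sym -subr_eq0 opprK -mulr2n -scaler_nat scaler_eq0 (negPf two_neq0) => /eqP.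
Qed.

Lemma t21_t11_shift n (k : nat) :
  (k.+1)%:R * sermul (tser t i2 i1 0) (tser t i1 i1 k%:R) n
  = k%:R * sermul (tser t i1 i1 k%:R) (tser t i2 i1 0) n
    + sermul (tser t i2 i1 k%:R) (tser t i1 i1 0) n.
Proof.
have := tser_rtt_swap i1 i1 i2 i1 k%:R n.
rewrite -[rtt_sign _ _ _ _]/0%N -[super_sign _ _ _ _]/0%N expr0 !mul1r scaler_nat.
set X := sermul _ _ n; set Y := sermul _ _ n; set Z := sermul _ _ n.
move=> eXY; have -> : Y = X - (Z - X) *+ k by rewrite -eXY opprB addrC subrK.
by rewrite !mulr_natl mulrnBl opprB addrCA subrKC -mulrS.
Qed.

End SuperYangian.

Theorem lemmaA1 (F : closedFieldType) (p : nat) (hp : prime p) (hp2 : (2 < p)%N)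
    (hchar : p \in [pchar F])
    (A : algType F) (t : 'I_2 -> 'I_2 -> nat -> A) (ht : yangian_rel t) :
  (* (1) t11(u-1) t12(u) = t12(u-1) t11(u) *)
  (forall n, sermul (tser t i1 i1 1) (tser t i1 i2 0) n
             = sermul (tser t i1 i2 1) (tser t i1 i1 0) n) /\
  (* (2) t11(u) t21(u-1) = t21(u) t11(u-1) *)
  (forall n, sermul (tser t i1 i1 0) (tser t i2 i1 1) n
             = sermul (tser t i2 i1 0) (tser t i1 i1 1) n) /\
  (* (3) t12(u-1) t12(u) = 0 *)
  (forall n, sermul (tser t i1 i2 1) (tser t i1 i2 0) n = 0) /\
  (* (4) (k+1) t21(u) t11(u-k) = k t11(u-k) t21(u) + t21(u-k) t11(u) *)
  (forall (k : nat) n,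
     (k.+1)%:R * sermul (tser t i2 i1 0) (tser t i1 i1 k%:R) n
     = k%:R * sermul (tser t i1 i1 k%:R) (tser t i2 i1 0) n
       + sermul (tser t i2 i1 k%:R) (tser t i1 i1 0) n).
Proof.
have two_neq0 : (2%:R : F) != 0 by rewrite -(dvdn_pcharf hchar) gtnNdvd.
split; first exact: t11_t12_exchange.
split; first exact: t11_t21_exchange.
split; first by move=> n; exact: t12_shift_sqr_eq0.
by move=> k n; exact: t21_t11_shift.
Qed.
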